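(* Let $\Bbbk$ be an algebraically closed field of characteristic $0$ and let $G \simeq C_m \times C_{lm}$ (with $m, l$ positive integers) be a finite abelian subgroup of $\mathrm{SL}_3(\Bbbk)$, where the embedding is given by the representation $\rho = \chi_1 \oplus \chi_2 \oplus \chi_3$ with $\chi_1,\chi_2,\chi_3$ one-dimensional characters of $G$. Suppose that no $\chi_i$ is the trivial character and that $|G| > 4$. Then there exists a direct product decomposition $G = H \times K$ with $H$ cyclic such that none of the restrictions $\chi_i|_H$ ($i=1,2,3$) is trivial.
   Context: $C_r$ denotes the cyclic group of order $r$. *)

From HB Require Import structures.
From mathcomp Require Import all_boot all_order all_algebra all_fingroup all_solvable.
Set Implicit Arguments. Unset Strict Implicit. Unset Printing Implicit Defensive.
Import GRing.Theory.
Local Open Scope ring_scope.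

Definition lin_char (gT : finGroupType) (k : fieldType) (G : {group gT})
    (chi : gT -> k) : Prop :=
  {in G &, forall x y, chi (x * y)%g = chi x * chi y} /\
  {in G, forall x, chi x != 0}.

Definition trivial_on (gT : finGroupType) (k : fieldType) (A : {set gT})
    (chi : gT -> k) : Prop :=
  {in A, forall x, chi x = 1}.

From HB Require Import structures.
From mathcomp Require Import all_boot all_order all_algebra all_fingroup all_solvable.
From mathcomp Require Import ring.

(* The kernels K_i of the three characters are cyclic and meet pairwise
   trivially: an element killed by two of the characters is killed by the
   third (determinant 1), hence is trivial (faithfulness), so any other
   character embeds K_i into the multiplicative group of k.
   Write G = <a> x <b> with #[a] | #[b] = exponent G.  Each y_s = b a^s also
   generates a complement of <a>, so it suffices to find, among a and the y_s,
   an element outside every K_i.  A cyclic subgroup of G containing an element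
   of order exponent G is generated by it; hence no kernel contains two y_s
   with s < #[a], nor a together with some y_s once #[a] = #[b].  As <y_0> and
   <y_1> then meet trivially, #[b]^2 <= |G| = #[a] #[b], so #[a] = #[b] > 2
   and the four elements a, y_0, y_1, y_2 cannot all lie in the three
   kernels. *)

Set Implicit Arguments.
Unset Strict Implicit.
Unset Printing Implicit Defensive.

Import GRing.Theory.
Local Open Scope ring_scope.

Section TwistedCycle.
Local Open Scope nat_scope.
Local Open Scope group_scope.

Variables (gT : finGroupType) (G A : {group gT}) (b x : gT).
Hypotheses (abA : abelian A) (dG : A \x <[b]> = G) (Ax : x \in A) (ox : #[x] %| #[b]).

Let cbx : commute b x.
Proof. by have [_ _ /centsP cAb _] := dprodP dG; apply: cAb; rewrite ?cycle_id. Qed.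

Lemma twist_expg_in t : (b * x) ^+ t \in A -> b ^+ t = 1.
Proof.
move=> bxA; have [_ _ _ /trivgP tiAb] := dprodP dG.
have bA : b ^+ t \in A.
  by rewrite -(mulgK (x ^+ t) (b ^+ t)) -expgMn // groupM // groupV groupX.
by apply/set1gP/(subsetP tiAb); rewrite inE bA mem_cycle.
Qed.

Lemma twist_TI : A :&: <[b * x]> = 1.
Proof.
rewrite setIC; apply/trivgP/subsetP=> _ /setIP[/cycleP[t ->] bxA]; rewrite inE.
have bt1 := twist_expg_in bxA.
have /eqP xt1 : x ^+ t == 1 by rewrite -order_dvdn (dvdn_trans ox) // order_dvdn bt1.
by rewrite expgMn // bt1 xt1 mulg1.
Qed.

Lemma order_twist : #[b * x] = #[b].
Proof.
have xb1 : x ^+ #[b] = 1 by apply/eqP; rewrite -order_dvdn.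
apply/eqP; rewrite eqn_dvd order_dvdn expgMn // expg_order xb1 mulg1 eqxx /=.
by rewrite order_dvdn; apply/eqP/twist_expg_in; rewrite expg_order group1.
Qed.

Lemma dprod_twist : A \x <[b * x]> = G.
Proof.
have [_ defG cAb _] := dprodP dG; have [sAG sbG] := mulG_sub defG.
have bxG : b * x \in G by rewrite groupM ?(subsetP sAG x Ax) ?(subsetP sbG b (cycle_id b)).
rewrite dprodE ?twist_TI //; last first.
  by rewrite cycle_subG groupM ?(subsetP abA x Ax) ?(subsetP cAb b (cycle_id b)).
apply/eqP; rewrite eqEcard mulG_subG sAG cycle_subG bxG /=.
by rewrite TI_cardMg ?twist_TI // -orderE order_twist orderE -(dprod_card dG).
Qed.

End TwistedCycle.

Section CyclicFactorAvoidingSubgroups.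
Local Open Scope nat_scope.
Local Open Scope group_scope.

Variable gT : finGroupType.

Lemma cycle_exponent_eq_cyclic (G K : {group gT}) u :
  cyclic K -> K \subset G -> u \in K -> exponent G %| #[u] -> <[u]> = K.
Proof.
move=> cycK sKG Ku eGu; apply/eqP; rewrite eqEcard cycle_subG Ku -orderE /=.
by rewrite dvdn_leq // -(exponent_cyclic cycK) (dvdn_trans (exponentS sKG)).
Qed.

Variables (G : {group gT}) (a b : gT) (K : 'I_3 -> {group gT}).
Hypotheses (dG : <[a]> \x <[b]> = G) (oa_dvd : #[a] %| #[b]).
Hypotheses (cycK : forall i, cyclic (K i)) (sKG : forall i, K i \subset G).
Hypothesis tiK : forall i j, i != j -> K i :&: K j = 1.

Let y s := b * a ^+ s.

Let expG : exponent G = #[b].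
Proof. by rewrite -(dprod_exponent dG) !exponent_cycle; apply/lcmn_idPr. Qed.

Let oaX_dvd s : #[a ^+ s] %| #[b].
Proof. exact: dvdn_trans (order_dvdG (mem_cycle a s)) _. Qed.

Let dGy s : <[a]> \x <[y s]> = G.
Proof. by apply: dprod_twist; rewrite ?cycle_abelian ?mem_cycle. Qed.

Let oy s : #[y s] = #[b].
Proof. by apply: order_twist dG _ _; rewrite ?mem_cycle. Qed.

Let ker_cycle i s : y s \in K i -> <[y s]> = K i.
Proof. by move=> yK; apply: cycle_exponent_eq_cyclic (cycK i) (sKG i) yK _; rewrite expG oy. Qed.

Lemma twist_mem_ker_inj i s t :
  s < #[a] -> t < #[a] -> y s \in K i -> y t \in K i -> s = t.
Proof.
move=> lt_s lt_t ysK ytK; have [_ _ _ tiAy] := dprodP (dGy s).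
have quot : (y s)^-1 * y t = (a ^+ s)^-1 * a ^+ t by rewrite /y invMg -mulgA mulKg.
have : (y s)^-1 * y t \in <[a]> :&: <[y s]>.
  by rewrite inE {1}quot groupM ?groupV ?mem_cycle //= (ker_cycle ysK) groupM ?groupV.
by rewrite tiAy inE quot -eq_mulVg1 eq_expg_mod_order !modn_small // => /eqP.
Qed.

Lemma order_le_twist_ker i j :
  1 < #[a] -> y 0 \in K i -> y 1 \in K j -> #[b] <= #[a].
Proof.
move=> a_gt1 y0K y1K.
have neq_ij : i != j.
  by apply/eqP=> eq_ij; move: y1K; rewrite -eq_ij => /(twist_mem_ker_inj (order_gt0 a) a_gt1 y0K).
have ti01 : <[y 0]> :&: <[y 1]> = 1 by rewrite (ker_cycle y0K) (ker_cycle y1K) tiK.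
have cardG : #|G| = (#[a] * #[b])%N by rewrite -(dprod_card dG) -!orderE.
have : (#[b] * #[b] <= #[a] * #[b])%N.
  rewrite -cardG -{1}(oy 0) -(oy 1) !orderE -TI_cardMg // subset_leq_card //.
  by rewrite mulG_subG !cycle_subG (subsetP (sKG i) _ y0K) (subsetP (sKG j) _ y1K).
by rewrite leq_pmul2r ?order_gt0.
Qed.

Lemma gen_twist_ker_eq1 i s :
  #[a] = #[b] -> a \in K i -> y s \in K i -> b = 1.
Proof.
move=> oab aK ysK; have [_ _ _ tiab] := dprodP dG.
have defK : <[a]> = K i.
  by apply: cycle_exponent_eq_cyclic (cycK i) (sKG i) aK _; rewrite expG oab.
have : b \in <[a]> :&: <[b]>.
  rewrite -defK in ysK.
  by rewrite inE cycle_id andbT -(mulgK (a ^+ s) b) groupM ?groupV ?mem_cycle.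
by rewrite tiab => /set1gP.
Qed.

Theorem exists_cyclic_factor_avoiding :
  4 < #|G| -> (forall i, K i \proper G) ->
  exists H C : {group gT}, [/\ H \x C = G, cyclic H & forall i, ~~ (H \subset K i)].
Proof.
move=> G_gt4 ltKG.
have [a_le1 | a_gt1] := leqP #[a] 1.
  have a1 : <[a]> = 1 by apply: card_le1_trivg; rewrite -orderE.
  exists G, 1%G; split; first exact: dprodg1.
    by rewrite -dG a1 dprod1g cycle_cyclic.
  by move=> i; have /andP[] := ltKG i.
suff [x [C [dxC xK]]] : exists x (C : {group gT}), <[x]> \x C = G /\ forall i, x \notin K i.
  by exists <[x]>%G, C; split; rewrite ?cycle_cyclic // => i; rewrite cycle_subG.
have [ga | /forallPn[ia /negbNE aK]] := boolP [forall i, a \notin K i].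
  by exists a, <[b]>%G; split=> // i; apply: (forallP ga).
have [s /forallP gys | bad] := pickP (fun s : 'I_3 => [forall i, y s \notin K i]).
  by exists (y s), <[a]>%G; rewrite dprodC.
have /fin_all_exists[ker yK] : forall s : 'I_3, exists i, y s \in K i.
  by move=> s; have /forallPn[i /negbNE] := negbT (bad s); exists i.
have oab : #[a] = #[b].
  by apply/eqP; rewrite eqn_leq (order_le_twist_ker a_gt1 (yK 0%R) (yK 1%R)) dvdn_leq.
have b_gt2 : 2 < #[b].
  rewrite ltnNge; apply: contraL G_gt4 => b_le2.
  by rewrite -leqNgt -(dprod_card dG) -!orderE oab (leq_mul b_le2 b_le2).
have inj_ker : injective ker.
  move=> s t eq_st; apply/val_inj.
  have lt_a (r : 'I_3) : r < #[a] by rewrite oab (leq_trans (ltn_ord r) b_gt2).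
  by apply: (twist_mem_ker_inj (lt_a s) (lt_a t) (yK s)); rewrite eq_st; apply: yK.
have /codomP[s def_ia] := inj_card_onto inj_ker (leqnn _) ia.
rewrite def_ia in aK.
by move: b_gt2; rewrite (gen_twist_ker_eq1 oab aK (yK s)) order1.
Qed.

End CyclicFactorAvoidingSubgroups.

Section LinearCharacterKernel.

Variables (gT : finGroupType) (k : fieldType) (G : {group gT}) (chi : gT -> k).
Hypothesis lin : lin_char G chi.

Lemma lin_char1 : chi 1%g = 1.
Proof.
have [chiM chi_neq0] := lin; apply: (mulfI (chi_neq0 _ (group1 G))).
by rewrite -chiM ?mulg1 ?mulr1.
Qed.

Fact lin_ker_group_set : group_set [set x in G | chi x == 1].
Proof.
apply/group_setP; split; first by rewrite inE group1 lin_char1 eqxx.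
move=> x y /[!inE] /andP[Gx /eqP chi_x] /andP[Gy /eqP chi_y].
by rewrite groupM // lin.1 // chi_x chi_y mulr1 eqxx.
Qed.

Definition lin_ker := Group lin_ker_group_set.

Lemma mem_lin_ker x : (x \in lin_ker) = (x \in G) && (chi x == 1).
Proof. by rewrite inE. Qed.

Lemma lin_ker_sub : lin_ker \subset G.
Proof. by apply/subsetP=> x /[!mem_lin_ker] /andP[]. Qed.

Lemma lin_kerP (H : {group gT}) :
  H \subset G -> reflect (trivial_on H chi) (H \subset lin_ker).
Proof.
move=> sHG; apply: (iffP subsetP) => [sHK x Hx | chiH x Hx].
  by move: (sHK x Hx); rewrite mem_lin_ker => /andP[_ /eqP].
by rewrite mem_lin_ker (subsetP sHG) // chiH ?eqxx.
Qed.

Lemma cyclic_lin_char_inj (H : {group gT}) :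
  H \subset G -> {in H, forall x, chi x = 1 -> x = 1%g} -> cyclic H.
Proof.
move=> sHG chi_inj; apply: (field_mul_group_cyclic (f := chi)).
  by move=> x y Hx Hy; rewrite lin.1 ?(subsetP sHG).
by move=> x Hx; split=> [|->]; [apply: chi_inj | apply: lin_char1].
Qed.

End LinearCharacterKernel.

Lemma mulr_ord3_perm (R : comPzRingType) (f : 'I_3 -> R) i j l :
  i != j -> l != i -> l != j -> f 0 * f 1 * f 2 = f i * f j * f l.
Proof.
have ord3 (m : 'I_3) : m = 0 \/ m = 1 \/ m = 2.
  by case: m => [[|[|[|//]]] lt_m]; [left | right; left | right; right]; apply: val_inj.
have [->|[->|->]] := ord3 i; have [->|[->|->]] := ord3 j;
  have [->|[->|->]] := ord3 l => // *; ring.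
Qed.

Section DiagonalSL3Characters.

Variables (gT : finGroupType) (k : fieldType) (G : {group gT}) (chi : 'I_3 -> gT -> k).
Hypothesis lin : forall i, lin_char G (chi i).
Hypothesis faithful : {in G, forall x, (forall i, chi i x = 1) -> x = 1%g}.
Hypothesis det1 : {in G, forall x, chi 0 x * chi 1 x * chi 2 x = 1}.

Lemma eq1_of_two_chars i j x :
  i != j -> x \in G -> chi i x = 1 -> chi j x = 1 -> x = 1%g.
Proof.
move=> neq_ij Gx chi_i chi_j; apply: faithful => // l.
have [-> // | neq_li] := eqVneq l i; have [-> // | neq_lj] := eqVneq l j.
by have := det1 Gx; rewrite (mulr_ord3_perm (chi^~ x) neq_ij neq_li neq_lj) chi_i chi_j !mul1r.
Qed.

Lemma cyclic_lin_ker i : cyclic (lin_ker (lin i)).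
Proof.
have [j neq_ji] : exists j : 'I_3, j != i.
  by exists (if i == 0 then 1 else 0); case: (eqVneq i 0) => [->|]; rewrite // eq_sym.
apply: (cyclic_lin_char_inj (lin j) (lin_ker_sub (lin i))) => x.
by rewrite mem_lin_ker => /andP[Gx /eqP chi_i] chi_j; apply: eq1_of_two_chars neq_ji Gx chi_j chi_i.
Qed.

Lemma lin_ker_TI i j : i != j -> lin_ker (lin i) :&: lin_ker (lin j) = 1%g.
Proof.
move=> neq_ij; apply/trivgP/subsetP=> x /setIP[].
rewrite !mem_lin_ker inE => /andP[Gx /eqP chi_i] /andP[_ /eqP chi_j].
by apply/eqP; apply: eq1_of_two_chars neq_ij Gx chi_i chi_j.
Qed.

End DiagonalSL3Characters.

Theorem lemma3p6 (k : closedFieldType) (gT : finGroupType) (G : {group gT})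
    (chi : 'I_3 -> gT -> k) :
  [pchar k] =i pred0 ->
  (* G is isomorphic to C_m x C_{lm}, m, l >= 1 (internal decomposition) *)
  (exists A B : {group gT},
      [/\ cyclic A, cyclic B, (A \x B)%g = G & (#|A| %| #|B|)%N]) ->
  (* each chi i is a one-dimensional character of G *)
  (forall i, lin_char G (chi i)) ->
  (* rho = chi 0 + chi 1 + chi 2 is faithful (G embeds in GL_3) *)
  {in G, forall x, (forall i, chi i x = 1) -> x = 1%g} ->
  (* rho lands in SL_3 *)
  {in G, forall x, chi 0 x * chi 1 x * chi 2 x = 1} ->
  (* no chi i is trivial *)
  (forall i, ~ trivial_on G (chi i)) ->
  (4 < #|G|)%N ->
  exists H K : {group gT},
    [/\ (H \x K)%g = G, cyclic H & forall i, ~ trivial_on H (chi i)].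
Proof.
move=> _ [A [B [cycA cycB dAB dvd_AB]]] lin faithful det1 ntriv G_gt4.
have [a defA] := cyclicP cycA; have [b defB] := cyclicP cycB.
rewrite defA defB in dAB dvd_AB; rewrite -!orderE in dvd_AB.
have ltKG i : lin_ker (lin i) \proper G.
  by rewrite properE lin_ker_sub; apply/(lin_kerP (lin i) (subxx G)); apply: ntriv.
have [H [C [dHC cycH nsubHK]]] := exists_cyclic_factor_avoiding
  (K := fun i => lin_ker (lin i)) dAB dvd_AB
  (cyclic_lin_ker lin faithful det1) (fun i => lin_ker_sub (lin i))
  (lin_ker_TI lin faithful det1) G_gt4 ltKG.
have [_ /mulG_sub[sHG _] _ _] := dprodP dHC.
by exists H, C; split=> // i /(lin_kerP (lin i) sHG); apply/negP/nsubHK.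
Qed.
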